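(* Let $R_1\xleftarrow{f}R_{12}\xrightarrow{g}R_2$ be a weakly admissible correspondence in $\mathrm{DGRings}^{0,-1}$. Then: (i) $f$ is surjective; (ii) $\ker f$ is acyclic; (iii) the DG ideal $I\subset R_{12}$ generated by $\ker(R_{12}^{-1}\to R_1^{-1}\times R_2^{-1})$ is acyclic; (iv) the correspondence $R_1\leftarrow R_{12}/I\to R_2$ (with maps induced by $f,g$) is the admissibilization $\mathrm{Adm}$ of the given correspondence.
   Context: Rings are commutative and unital. $\mathrm{DGRings}^{0,-1}$ is the category of commutative DG rings $R$ with $R^i=0$ for $i\ne 0,-1$. Equivalently, such $R$ is a ring $R^0$, an $R^0$-module $R^{-1}$ and an $R^0$-linear $d:R^{-1}\to R^0$ with $d(x)y=d(y)x$. Quasi-isomorphisms are morphisms inducing isomorphisms on $\ker d$ and $\operatorname{coker} d$. A correspondence is a diagram $R_1\xleftarrow{f}R_{12}\xrightarrow{g}R_2$ in $\mathrm{DGRings}^{0,-1}$. Morphisms are maps $h$ of middle terms with $f'h=f$, $g'h=g$. A correspondence is admissible (resp. weakly admissible) if $f$ is a quasi-isomorphism and $R_{12}^{-1}\to R_1^{-1}\times R_2^{-1}$ is an isomorphism (resp. surjective). It is an anamorphism if $f$ is a surjective quasi-isomorphism. Weakly admissible correspondences are anamorphisms. $\mathrm{Adm}$ denotes the left adjoint of the inclusion of admissible correspondences into anamorphisms (from $R_1$ to $R_2$). *)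

From HB Require Import structures.
From mathcomp Require Import all_boot all_order all_algebra.
Set Implicit Arguments. Unset Strict Implicit. Unset Printing Implicit Defensive.
Import GRing.Theory.
Local Open Scope ring_scope.

(** Commutative DG rings concentrated in degrees 0 and -1:
    a commutative ring R^0, an R^0-module R^{-1}, and an R^0-linear
    d : R^{-1} -> R^0 with d(x) y = d(y) x.  (Zero ring allowed.) *)
Record dgring := DGRing {
  dg0 : comPzRingType;
  dg1 : lmodType dg0;
  dgd : dg1 -> dg0;
  dgd_lin : forall (a : dg0) (x y : dg1), dgd (a *: x + y) = a * dgd x + dgd y;
  dgd_sym : forall x y : dg1, dgd x *: y = dgd y *: x }.

Record dghom (R S : dgring) := DGHom {
  hom0 : {rmorphism dg0 R -> dg0 S};
  hom1 : dg1 R -> dg1 S;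
  hom1_lin : forall (a : dg0 R) (x y : dg1 R),
      hom1 (a *: x + y) = hom0 a *: hom1 x + hom1 y;
  hom_d : forall x : dg1 R, @dgd S (hom1 x) = hom0 (@dgd R x) }.

Definition factors (A B C : dgring) (g : dghom B C) (f : dghom A B)
  (h : dghom A C) : Prop :=
  (forall r, hom0 g (hom0 f r) = hom0 h r) /\
  (forall x, hom1 g (hom1 f x) = hom1 h x).

Definition hom_eq (A B : dgring) (f g : dghom A B) : Prop :=
  (forall r, hom0 f r = hom0 g r) /\ (forall x, hom1 f x = hom1 g x).

(** Quasi-isomorphism: induced maps on ker d and coker d are bijective. *)
Definition quasi_iso (R S : dgring) (f : dghom R S) : Prop :=
  (forall x y : dg1 R, @dgd R x = 0 -> @dgd R y = 0 -> hom1 f x = hom1 f y -> x = y) /\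
  (forall y : dg1 S, @dgd S y = 0 -> exists x : dg1 R, @dgd R x = 0 /\ hom1 f x = y) /\
  (* injective on coker d = R^0 / d(R^{-1}) *)
  (forall r : dg0 R, (exists y : dg1 S, @dgd S y = hom0 f r) ->
      exists x : dg1 R, @dgd R x = r) /\
  (forall s : dg0 S, exists (r : dg0 R) (y : dg1 S), s = hom0 f r + @dgd S y).

Definition surjective_hom (R S : dgring) (f : dghom R S) : Prop :=
  (forall s : dg0 S, exists r, hom0 f r = s) /\
  (forall y : dg1 S, exists x, hom1 f x = y).

Record corr (R1 R2 : dgring) := Corr {
  mid : dgring;
  cf : dghom mid R1;
  cg : dghom mid R2 }.

Definition corr_mor (R1 R2 : dgring) (C C' : corr R1 R2)
  (h : dghom (mid C) (mid C')) : Prop :=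
  factors (cf C') h (cf C) /\ factors (cg C') h (cg C).

(** the map R12^{-1} -> R1^{-1} x R2^{-1} *)
Definition pair_inj (R1 R2 : dgring) (C : corr R1 R2) : Prop :=
  forall x y : dg1 (mid C),
    hom1 (cf C) x = hom1 (cf C) y -> hom1 (cg C) x = hom1 (cg C) y -> x = y.
Definition pair_surj (R1 R2 : dgring) (C : corr R1 R2) : Prop :=
  forall (a : dg1 R1) (b : dg1 R2),
    exists x : dg1 (mid C), hom1 (cf C) x = a /\ hom1 (cg C) x = b.

Definition admissible (R1 R2 : dgring) (C : corr R1 R2) : Prop :=
  quasi_iso (cf C) /\ pair_inj C /\ pair_surj C.

Definition weakly_admissible (R1 R2 : dgring) (C : corr R1 R2) : Prop :=
  quasi_iso (cf C) /\ pair_surj C.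

Definition dg_ideal (R : dgring) (J0 : dg0 R -> Prop) (J1 : dg1 R -> Prop) : Prop :=
  J0 0 /\ (forall a b, J0 a -> J0 b -> J0 (a - b)) /\
  (forall r a, J0 a -> J0 (r * a)) /\
  J1 0 /\ (forall x y, J1 x -> J1 y -> J1 (x - y)) /\
  (forall r x, J1 x -> J1 (r *: x)) /\
  (forall x, J1 x -> J0 (@dgd R x)) /\
  (forall a x, J0 a -> J1 (a *: x)).

Definition gen_ideal0 (R : dgring) (K : dg1 R -> Prop) (r : dg0 R) : Prop :=
  forall J0 J1, dg_ideal J0 J1 -> (forall x, K x -> J1 x) -> J0 r.
Definition gen_ideal1 (R : dgring) (K : dg1 R -> Prop) (x : dg1 R) : Prop :=
  forall J0 J1, dg_ideal J0 J1 -> (forall y, K y -> J1 y) -> J1 x.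

Definition acyclic_sub (R : dgring) (J0 : dg0 R -> Prop) (J1 : dg1 R -> Prop) : Prop :=
  (forall x, J1 x -> @dgd R x = 0 -> x = 0) /\
  (forall r, J0 r -> exists x, J1 x /\ @dgd R x = r).

Definition ker0 (R S : dgring) (f : dghom R S) (r : dg0 R) : Prop := hom0 f r = 0.
Definition ker1 (R S : dgring) (f : dghom R S) (x : dg1 R) : Prop := hom1 f x = 0.

Definition pair_ker (R1 R2 : dgring) (C : corr R1 R2) (x : dg1 (mid C)) : Prop :=
  hom1 (cf C) x = 0 /\ hom1 (cg C) x = 0.
Arguments pair_ker {R1 R2} C x.

(** C' together with eta : C -> C' is Adm(C): C' is admissible, eta is a
    morphism of correspondences, and eta is universal among morphisms from C
    to admissible correspondences (unit of the left adjoint). *)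
Definition is_Adm (R1 R2 : dgring) (C C' : corr R1 R2)
  (eta : dghom (mid C) (mid C')) : Prop :=
  admissible C' /\ corr_mor eta /\
  forall (D : corr R1 R2) (h : dghom (mid C) (mid D)),
    admissible D -> corr_mor h ->
    exists h' : dghom (mid C') (mid D),
      corr_mor h' /\ factors h' eta h /\
      forall h'' : dghom (mid C') (mid D),
        corr_mor h'' -> factors h'' eta h -> hom_eq h'' h'.
Arguments is_Adm {R1 R2} C C' eta.
Arguments corr_mor {R1 R2} C C' h.

From HB Require Import structures.
From mathcomp Require Import all_boot all_order all_algebra.
From Stdlib Require Import ClassicalEpsilon.
Set Implicit Arguments. Unset Strict Implicit. Unset Printing Implicit Defensive.
Import GRing.Theory.
Local Open Scope ring_scope.

(** Weak admissibility makes [f] surjective in degree -1, hence (with surjectivity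
    on cokernels) surjective; bijectivity on [ker d] and injectivity on [coker d]
    then say exactly that [d] maps [ker f^{-1}] isomorphically onto [ker f^0].  The
    kernel [K] of [R12^{-1} -> R1^{-1} x R2^{-1}] is a submodule of [ker f^{-1}],
    and since [d(k) x = d(x) k] the pair [(d K, K)] is already a DG ideal, so
    [I = (d K, K)] is acyclic.  Dividing by an acyclic ideal keeps [f] a
    quasi-isomorphism and makes the pair map injective; a morphism into an
    admissible correspondence kills [K] (its pair map is injective), hence [I],
    so it factors uniquely through [R12 / I]. *)

Section DGRingMorphismLemmas.
Variables (A B : dgring) (f : dghom A B).

Lemma hom1D x y : hom1 f (x + y) = hom1 f x + hom1 f y.
Proof. by have := hom1_lin f 1 x y; rewrite rmorph1 !scale1r. Qed.

Lemma hom10 : hom1 f 0 = 0.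
Proof. by apply: (addrI (hom1 f 0)); rewrite -hom1D !addr0. Qed.

Lemma hom1B x y : hom1 f (x - y) = hom1 f x - hom1 f y.
Proof. by apply: (addIr (hom1 f y)); rewrite -hom1D !subrK. Qed.

Lemma hom1Z a x : hom1 f (a *: x) = hom0 f a *: hom1 f x.
Proof. by have := hom1_lin f a x 0; rewrite !addr0 hom10 addr0. Qed.

Lemma dgdD (x y : dg1 A) : dgd (x + y) = dgd x + dgd y.
Proof. by have := dgd_lin 1 x y; rewrite scale1r mul1r. Qed.

Lemma dgd0 : dgd (0 : dg1 A) = 0.
Proof. by apply: (addrI (dgd (0 : dg1 A))); rewrite -dgdD !addr0. Qed.

Lemma dgdB (x y : dg1 A) : dgd (x - y) = dgd x - dgd y.
Proof. by apply: (addIr (dgd y)); rewrite -dgdD !subrK. Qed.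

Lemma dgdZ a (x : dg1 A) : dgd (a *: x) = a * dgd x.
Proof. by have := dgd_lin a x 0; rewrite !addr0 dgd0 addr0. Qed.

End DGRingMorphismLemmas.

Definition dg_image (R : dgring) (K : dg1 R -> Prop) (r : dg0 R) : Prop :=
  exists k, K k /\ dgd k = r.

Lemma quasi_iso_surjective (R S : dgring) (f : dghom R S) :
  quasi_iso f -> (forall y, exists x, hom1 f x = y) -> surjective_hom f.
Proof.
move=> [_ [_ [_ coker_surj]]] surj1; split=> // s.
have [r [y ->]] := coker_surj s; have [x <-] := surj1 y.
by exists (r + dgd x); rewrite rmorphD hom_d.
Qed.

Lemma quasi_iso_ker_acyclic (R S : dgring) (f : dghom R S) :
  quasi_iso f -> acyclic_sub (ker0 f) (ker1 f).
Proof.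
move=> [ker_inj [ker_surj [coker_inj _]]]; split.
  by move=> x fx0 dx0; apply: ker_inj; rewrite ?dgd0 ?hom10.
rewrite /ker0 /ker1 => r fr0.
have [x dx] : exists x, dgd x = r by apply: coker_inj; exists 0; rewrite dgd0 fr0.
have [z [dz fz]] : exists z, dgd z = 0 /\ hom1 f z = hom1 f x.
  by apply: ker_surj; rewrite hom_d dx.
by exists (x - z); rewrite hom1B fz subrr dgdB dz subr0.
Qed.

Definition submodule (R : dgring) (K : dg1 R -> Prop) : Prop :=
  [/\ K 0, forall x y, K x -> K y -> K (x - y) & forall a x, K x -> K (a *: x)].

Section GeneratedIdeal.
Variables (R : dgring) (K : dg1 R -> Prop).
Hypothesis K_submodule : submodule K.

Lemma submodule_dg_ideal : dg_ideal (dg_image K) K.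
Proof.
have [K0 KB KZ] := K_submodule.
rewrite /dg_ideal; split; [|split; [|split; [|split; [|split; [|split; [|split]]]]]].
- by exists 0; rewrite dgd0.
- by move=> _ _ [k [Kk <-]] [l [Kl <-]]; exists (k - l); split; [apply: KB | rewrite dgdB].
- by move=> a _ [k [Kk <-]]; exists (a *: k); split; [apply: KZ | rewrite dgdZ].
- exact: K0.
- exact: KB.
- exact: KZ.
- by move=> x Kx; exists x.
(* [d k *: x = d x *: k], so [R^{-1} . d K] lies in [K] for free *)
- by move=> _ x [k [Kk <-]]; rewrite dgd_sym; apply: KZ.
Qed.

Lemma gen_ideal1_submodule x : gen_ideal1 K x <-> K x.
Proof.
split; first by move/(_ _ _ submodule_dg_ideal); apply.
by move=> Kx J0 J1 _; apply.
Qed.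

Lemma gen_ideal0_submodule r : gen_ideal0 K r <-> dg_image K r.
Proof.
split; first by move/(_ _ _ submodule_dg_ideal); apply.
move=> [k [Kk <-]] J0 J1 [_ [_ [_ [_ [_ [_ [dJ1 _]]]]]]] KJ1.
exact/dJ1/KJ1.
Qed.

Lemma gen_ideal_acyclic :
  (forall x, K x -> dgd x = 0 -> x = 0) ->
  acyclic_sub (gen_ideal0 K) (gen_ideal1 K).
Proof.
move=> d_inj; split.
  by move=> x /gen_ideal1_submodule; apply: d_inj.
move=> r /gen_ideal0_submodule [k [Kk dk]].
by exists k; rewrite gen_ideal1_submodule.
Qed.

End GeneratedIdeal.

Lemma pair_ker_submodule (R1 R2 : dgring) (C : corr R1 R2) :
  submodule (pair_ker C).
Proof.
split.
- by rewrite /pair_ker !hom10.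
- by move=> x y [fx gx] [fy gy]; rewrite /pair_ker !hom1B fx gx fy gy !subrr.
- by move=> a x [fx gx]; rewrite /pair_ker !hom1Z fx gx !scaler0.
Qed.

Lemma quasi_iso_factor (A Q B : dgring) (pi : dghom A Q) (f : dghom A B)
    (f' : dghom Q B) :
  surjective_hom pi -> (forall r, hom0 pi r = 0 -> dg_image (ker1 pi) r) ->
  factors f' pi f -> quasi_iso f -> quasi_iso f'.
Proof.
move=> [pi0 pi1] ker_pi [ff0 ff1] [ker_inj [ker_surj [coker_inj coker_surj]]].
split; [|split; [|split]].
- move=> q1 q2; have [x1 <-] := pi1 q1; have [x2 <-] := pi1 q2.
  rewrite !hom_d => /ker_pi [k1 [pk1 dk1]] /ker_pi [k2 [pk2 dk2]] e.
  have -> : hom1 pi x1 = hom1 pi (x1 - k1) by rewrite hom1B pk1 subr0.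
  have -> : hom1 pi x2 = hom1 pi (x2 - k2) by rewrite hom1B pk2 subr0.
  congr (hom1 pi _); apply: ker_inj; rewrite ?dgdB ?dk1 ?dk2 ?subrr //.
  by rewrite -!ff1 !hom1B pk1 pk2 e.
- move=> y dy; have [x [dx <-]] := ker_surj y dy.
  by exists (hom1 pi x); rewrite hom_d dx rmorph0 ff1.
- move=> q; have [r <-] := pi0 q; move=> [y ey].
  have [x dx] : exists x, dgd x = r by apply: coker_inj; exists y; rewrite ey ff0.
  by exists (hom1 pi x); rewrite hom_d dx.
- move=> s; have [r [y ->]] := coker_surj s.
  by exists (hom0 pi r), y; rewrite ff0.
Qed.

Section CorrespondenceMorphisms.
Variables (R1 R2 : dgring) (C C' : corr R1 R2) (pi : dghom (mid C) (mid C')).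
Hypothesis pi_mor : corr_mor C C' pi.

Lemma pair_surj_corr_mor : pair_surj C -> pair_surj C'.
Proof.
have [[_ ff1] [_ gg1]] := pi_mor.
move=> surjC a b; have [x [<- <-]] := surjC a b.
by exists (hom1 pi x); rewrite ff1 gg1.
Qed.

Lemma pair_inj_corr_mor :
  (forall q, exists x, hom1 pi x = q) ->
  (forall x, pair_ker C x -> hom1 pi x = 0) -> pair_inj C'.
Proof.
have [[_ ff1] [_ gg1]] := pi_mor.
move=> pi1 Kpi q1 q2; have [x1 <-] := pi1 q1; have [x2 <-] := pi1 q2.
rewrite !ff1 !gg1 => ef eg; apply/eqP; rewrite -subr_eq0 -hom1B; apply/eqP/Kpi.
by rewrite /pair_ker !hom1B ef eg !subrr.
Qed.

Lemma pair_ker_corr_mor x : pair_inj C' -> pair_ker C x -> hom1 pi x = 0.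
Proof.
have [[_ ff1] [_ gg1]] := pi_mor.
move=> injC' [fx gx]; apply: injC'; by rewrite hom10 ?ff1 ?gg1.
Qed.

End CorrespondenceMorphisms.

Section SurjectionCancellation.
Variables (A Q B : dgring) (pi : dghom A Q).
Hypothesis pi_surj : surjective_hom pi.

Lemma factors_surj_unique (u v : dghom Q B) (w : dghom A B) :
  factors u pi w -> factors v pi w -> hom_eq u v.
Proof.
have [pi0 pi1] := pi_surj.
move=> [uw0 uw1] [vw0 vw1]; split.
  by move=> q; have [r <-] := pi0 q; rewrite uw0 vw0.
by move=> q; have [x <-] := pi1 q; rewrite uw1 vw1.
Qed.

Lemma factors_surj_cancel (D : dgring) (h : dghom A D) (h' : dghom Q D)
    (f : dghom A B) (f' : dghom Q B) (g : dghom D B) :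
  factors h' pi h -> factors f' pi f -> factors g h f -> factors g h' f'.
Proof.
have [pi0 pi1] := pi_surj.
move=> [hh0 hh1] [ff0 ff1] [gh0 gh1]; split.
  by move=> q; have [r <-] := pi0 q; rewrite hh0 ff0 gh0.
by move=> q; have [x <-] := pi1 q; rewrite hh1 ff1 gh1.
Qed.

End SurjectionCancellation.

Section FactorThroughSurjection.
Variables (A Q D : dgring) (pi : dghom A Q) (h : dghom A D).
Hypothesis pi_surj : surjective_hom pi.
Hypothesis ker0_sub : forall r, hom0 pi r = 0 -> hom0 h r = 0.
Hypothesis ker1_sub : forall x, hom1 pi x = 0 -> hom1 h x = 0.

Let lift0 (q : dg0 Q) : dg0 A :=
  proj1_sig (constructive_indefinite_description _ (proj1 pi_surj q)).
Let lift1 (q : dg1 Q) : dg1 A :=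
  proj1_sig (constructive_indefinite_description _ (proj2 pi_surj q)).

Let lift0K q : hom0 pi (lift0 q) = q.
Proof. exact: proj2_sig (constructive_indefinite_description _ (proj1 pi_surj q)). Qed.
Let lift1K q : hom1 pi (lift1 q) = q.
Proof. exact: proj2_sig (constructive_indefinite_description _ (proj2 pi_surj q)). Qed.

Definition factor0 (q : dg0 Q) : dg0 D := hom0 h (lift0 q).
Definition factor1 (q : dg1 Q) : dg1 D := hom1 h (lift1 q).

Lemma factor0E r : factor0 (hom0 pi r) = hom0 h r.
Proof.
apply/eqP; rewrite -subr_eq0 -rmorphB ker0_sub //.
by rewrite rmorphB lift0K subrr.
Qed.

Lemma factor1E x : factor1 (hom1 pi x) = hom1 h x.
Proof.
apply/eqP; rewrite -subr_eq0 -hom1B ker1_sub //.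
by rewrite hom1B lift1K subrr.
Qed.

Lemma factor0_zmod_morphism : GRing.zmod_morphism factor0.
Proof.
by move=> q1 q2; rewrite -(lift0K q1) -(lift0K q2) -rmorphB !factor0E rmorphB.
Qed.

Lemma factor0_monoid_morphism : GRing.monoid_morphism factor0.
Proof.
split; first by rewrite -(rmorph1 (hom0 pi)) factor0E rmorph1.
by move=> q1 q2; rewrite -(lift0K q1) -(lift0K q2) -rmorphM !factor0E rmorphM.
Qed.

Definition factor0_rmorphism : {rmorphism dg0 Q -> dg0 D} :=
  HB.pack factor0
    (GRing.isZmodMorphism.Build _ _ factor0 factor0_zmod_morphism)
    (GRing.isMonoidMorphism.Build _ _ factor0 factor0_monoid_morphism).

Lemma factor1_lin (a : dg0 Q) (x y : dg1 Q) :
  factor1 (a *: x + y) = factor0_rmorphism a *: factor1 x + factor1 y.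
Proof.
rewrite -(lift0K a) -(lift1K x) -(lift1K y) -hom1_lin /=.
by rewrite !factor1E factor0E hom1_lin.
Qed.

Lemma factor_d (x : dg1 Q) : dgd (factor1 x) = factor0_rmorphism (dgd x).
Proof. by rewrite -(lift1K x) hom_d /= factor1E factor0E hom_d. Qed.

Definition dg_factor : dghom Q D := DGHom factor1_lin factor_d.

Lemma dg_factorK : factors dg_factor pi h.
Proof. by split=> ? /=; rewrite (factor0E, factor1E). Qed.

End FactorThroughSurjection.

Section Admissibilization.
Variables (R1 R2 : dgring) (C C' : corr R1 R2) (pi : dghom (mid C) (mid C')).
Hypotheses (pi_mor : corr_mor C C' pi) (pi_surj : surjective_hom pi).
Hypothesis ker0_pi : forall r, hom0 pi r = 0 -> dg_image (ker1 pi) r.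

Lemma quotient_admissible :
  (forall x, pair_ker C x -> hom1 pi x = 0) ->
  weakly_admissible C -> admissible C'.
Proof.
move=> Kpi [qiC surjC]; split; last split.
- exact: quasi_iso_factor pi_surj ker0_pi (proj1 pi_mor) qiC.
- exact: pair_inj_corr_mor pi_mor (proj2 pi_surj) Kpi.
- exact: pair_surj_corr_mor pi_mor surjC.
Qed.

Lemma quotient_is_Adm :
  (forall x, hom1 pi x = 0 <-> pair_ker C x) ->
  weakly_admissible C -> is_Adm C C' pi.
Proof.
move=> ker1E wadm.
split; first by apply: quotient_admissible => // x /ker1E.
split=> // D h [_ [injD _]] h_mor.
have ker1_sub x : hom1 pi x = 0 -> hom1 h x = 0.
  by move/ker1E; apply: pair_ker_corr_mor.
have ker0_sub r : hom0 pi r = 0 -> hom0 h r = 0.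
  by move/ker0_pi => [k [/ker1_sub hk <-]]; rewrite -hom_d hk dgd0.
have hK := dg_factorK pi_surj ker0_sub ker1_sub.
exists (dg_factor pi_surj ker0_sub ker1_sub); split; last split => //.
  have [[fC' gC'] [fD gD]] := (pi_mor, h_mor).
  by split; [apply: factors_surj_cancel fC' fD | apply: factors_surj_cancel gC' gD].
by move=> h'' _ h''K; exact: (factors_surj_unique pi_surj h''K hK).
Qed.

End Admissibilization.

Theorem lemma4p3p3 (R1 R2 : dgring) (C : corr R1 R2) :
  weakly_admissible C ->
  (* (i) f is surjective *)
  surjective_hom (cf C) /\
  (* (ii) ker f is acyclic *)
  acyclic_sub (ker0 (cf C)) (ker1 (cf C)) /\
  (* (iii) the DG ideal I generated by ker(R12^{-1} -> R1^{-1} x R2^{-1}) is acyclic *)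
  acyclic_sub (gen_ideal0 (pair_ker C)) (gen_ideal1 (pair_ker C)) /\
  (* (iv) R1 <- R12/I -> R2 is Adm of C; R12/I is given by any surjection
     pi : R12 -> Q with kernel exactly I, and f', g' the induced maps *)
  (forall (Q : dgring) (pi : dghom (mid C) Q)
          (f' : dghom Q R1) (g' : dghom Q R2),
     surjective_hom pi ->
     (forall r, hom0 pi r = 0 <-> gen_ideal0 (pair_ker C) r) ->
     (forall x, hom1 pi x = 0 <-> gen_ideal1 (pair_ker C) x) ->
     factors f' pi (cf C) -> factors g' pi (cg C) ->
     is_Adm C (Corr f' g') pi).
Proof.
move=> wadm; have [qiC surjC] := wadm.
have f_surj : surjective_hom (cf C).
  by apply: (quasi_iso_surjective qiC) => y; have [x [fx _]] := surjC y 0; exists x.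
have ker_acyclic := quasi_iso_ker_acyclic qiC.
have K_sub := pair_ker_submodule C.
split=> //; split=> //; split.
  by apply: gen_ideal_acyclic K_sub _ => x [fx _]; apply: (proj1 ker_acyclic).
move=> Q pi f' g' pi_surj ker0E ker1E ff gg.
apply: quotient_is_Adm => //.
- move=> r /ker0E /(gen_ideal0_submodule K_sub) [k [Kk <-]].
  by exists k; split=> //; apply/ker1E/(gen_ideal1_submodule K_sub).
- by move=> x; rewrite ker1E gen_ideal1_submodule.
Qed.
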